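(* Let $C$ be a binary linear $[n,k]$ code with minimum distance $d(C)$ and covering radius $\rho(C)$, let $G$ be a generator matrix of $C$ with rows $\mathbf r_1,\dots,\mathbf r_k$, let $\mathbf x=(x_1,\dots,x_n)\in\mathbb F_2^n$ and $y_i=\mathbf x\cdot\mathbf r_i$. Let $C_i$ ($i=1,2,3$) be the code obtained by any of Constructions I–IV, namely: $C_1$ (when $\mathbf x\cdot\mathbf x=1$) and $C_3$ (when $\mathbf x\cdot\mathbf x=0$) generated by the matrix with first row $(1,0,x_1,\dots,x_n)$ and further rows $(y_i,y_i,\mathbf r_i)$, $1\le i\le k$; and $C_2$ (when $\mathbf x\cdot\mathbf x=0$) generated by the matrix with first row $(1,1,x_1,\dots,x_n)$ and further rows $(y_i,0,\mathbf r_i)$, $1\le i\le k$. Then \[ \min\{d(C),\mathrm{weight}(\mathbf x+C)+1\}\le d(C_i)\le \rho(C)+2 . \]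
   Context: $\mathrm{weight}(\mathbf x+C)$ denotes the minimum Hamming weight of a vector in the coset $\mathbf x+C$. The covering radius $\rho(C)$ is the maximum over $\mathbf u\in\mathbb F_2^n$ of the Hamming distance from $\mathbf u$ to $C$. Dot products are standard over $\mathbb F_2$. *)

From HB Require Import structures.
From mathcomp Require Import all_boot all_order all_algebra.
Set Implicit Arguments. Unset Strict Implicit. Unset Printing Implicit Defensive.
Import GRing.Theory.
Local Open Scope ring_scope.

Definition wt n (v : 'rV['F_2]_n) : nat := #|[set i | v 0 i != 0]|.

Definition dot n (u v : 'rV['F_2]_n) : 'F_2 := (u *m v^T) 0 0.

Definition code k n (G : 'M['F_2]_(k, n)) : {set 'rV['F_2]_n} :=
  [set v | (v <= G)%MS].

(* minimum distance: least weight of a nonzero codeword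
   (the default value n is only reached if the code is {0}) *)
Definition mindist n (C : {set 'rV['F_2]_n}) : nat :=
  \big[minn/n]_(c in C | c != 0) wt c.

Definition coset_wt n (x : 'rV['F_2]_n) (C : {set 'rV['F_2]_n}) : nat :=
  \big[minn/n]_(c in C) wt (x + c).

Definition dist_to n (u : 'rV['F_2]_n) (C : {set 'rV['F_2]_n}) : nat :=
  \big[minn/n]_(c in C) wt (u - c).
Definition covering_radius n (C : {set 'rV['F_2]_n}) : nat :=
  \max_(u : 'rV['F_2]_n) dist_to u C.

Definition ext n (a b : 'F_2) (v : 'rV['F_2]_n) : 'rV['F_2]_(2 + n) :=
  row_mx (\row_(j < 2) if j == 0%N :> nat then a else b) v.

Definition G13 k n (G : 'M['F_2]_(k, n)) (x : 'rV['F_2]_n) : 'M['F_2]_(1 + k, 2 + n) :=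
  col_mx (ext 1 0 x)
         (\matrix_(i < k) ext (dot x (row i G)) (dot x (row i G)) (row i G)).

Definition G2 k n (G : 'M['F_2]_(k, n)) (x : 'rV['F_2]_n) : 'M['F_2]_(1 + k, 2 + n) :=
  col_mx (ext 1 1 x)
         (\matrix_(i < k) ext (dot x (row i G)) 0 (row i G)).

From HB Require Import structures.
From mathcomp Require Import all_boot all_order all_algebra.
Set Implicit Arguments. Unset Strict Implicit. Unset Printing Implicit Defensive.
Import Order.TTheory GRing.Theory.
Local Open Scope ring_scope.

(* All three constructions have the form C' = { a (p0, q0, x) + (p y, q y, c) :
   a in F_2, c in C, y = x.c }.  A nonzero codeword with a = 0 has weight at
   least wt c >= d(C).  A codeword with a = 1 is (., ., x + c) with a prefix
   that never vanishes, so its weight lies between wt (x + c) + 1 and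
   wt (x + c) + 2; choosing c with wt (x + c) = weight(x + C) <= rho(C) gives
   the upper bound.  Neither x.x, nor 0 < k, nor the freeness of the rows of G
   plays any role in the bounds. *)

Lemma F2_eq01 (a : 'F_2) : a = 0 \/ a = 1.
Proof. by case: a => [[|[|//]] ?]; [left|right]; apply: val_inj. Qed.

Lemma oppF2 (a : 'F_2) : - a = a.
Proof. by rewrite oppr_pchar2 // pchar_Fp. Qed.

Lemma dotC n (u v : 'rV['F_2]_n) : dot u v = dot v u.
Proof. by rewrite /dot -[v *m u^T]trmxK trmx_mul trmxK [RHS]mxE. Qed.

Lemma dotx0 n (x : 'rV['F_2]_n) : dot x 0 = 0.
Proof. by rewrite /dot trmx0 mulmx0 mxE. Qed.

Lemma wt_le_n n (v : 'rV['F_2]_n) : (wt v <= n)%N.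
Proof. by rewrite /wt -[n in (_ <= n)%N]card_ord max_card. Qed.

Lemma wt0 n : wt (0 : 'rV['F_2]_n) = 0%N.
Proof.
by apply/eqP; rewrite cards_eq0; apply/eqP/setP => i; rewrite !inE mxE eqxx.
Qed.

Lemma mindist_le n (C : {set 'rV['F_2]_n}) v :
  v \in C -> v != 0 -> (mindist C <= wt v)%N.
Proof. by move=> Cv v_nz; apply: (@bigmin_le_cond _ nat); rewrite Cv v_nz. Qed.

Lemma leq_mindist n (C : {set 'rV['F_2]_n}) m :
  (m <= n)%N -> (forall v, v \in C -> v != 0 -> (m <= wt v)%N) ->
  (m <= mindist C)%N.
Proof.
by move=> m_le lb; apply: (@le_bigmin _ nat) => // v /andP[]; exact: lb.
Qed.

Lemma coset_wt_le n (x : 'rV['F_2]_n) (C : {set 'rV['F_2]_n}) c :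
  c \in C -> (coset_wt x C <= wt (x + c))%N.
Proof. exact: (@bigmin_le_cond _ nat). Qed.

Lemma coset_wt_attained n (x : 'rV['F_2]_n) (C : {set 'rV['F_2]_n}) :
  0 \in C -> exists2 c, c \in C & coset_wt x C = wt (x + c).
Proof.
move=> C0; exists [arg min_(c < 0 in C) wt (x + c)]; first by case: arg_minnP.
by apply: (@bigmin_eq_arg _ nat) => // c _; exact: wt_le_n.
Qed.

Lemma coset_wt_le_covering_radius n (x : 'rV['F_2]_n) (C : {set 'rV['F_2]_n}) :
  (coset_wt x C <= covering_radius C)%N.
Proof.
have -> : coset_wt x C = dist_to x C.
  by apply: eq_bigr => c _; congr wt; apply/rowP => j; rewrite !mxE oppF2.
exact: leq_bigmax.
Qed.

Lemma code0 k n (G : 'M['F_2]_(k, n)) : 0 \in code G.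
Proof. by rewrite inE sub0mx. Qed.

Lemma mem_code_row_col k n (A : 'rV['F_2]_n) (B : 'M['F_2]_(k, n)) v :
  v \in code (col_mx A B) <-> exists a, exists2 w, w \in code B & v = a *: A + w.
Proof.
rewrite inE; split=> [/submxP[u ->] | [a [w]]].
  exists (lsubmx u 0 0), (rsubmx u *m B); first by rewrite inE submxMl.
  by rewrite -{1}[u]hsubmxK mul_row_col {1}(mx11_scalar (lsubmx u)) mul_scalar_mx.
rewrite inE => /submxP[u ->] ->; apply/submxP; exists (row_mx a%:M u).
by rewrite mul_row_col mul_scalar_mx.
Qed.

Lemma mem_code_mulmx k n m (G : 'M['F_2]_(k, n)) (M : 'M['F_2]_(n, m)) w :
  w \in code (G *m M) <-> exists2 c, c \in code G & w = c *m M.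
Proof.
rewrite inE; split=> [/submxP[u ->] | [c]].
  by exists (u *m G); rewrite ?inE ?submxMl ?mulmxA.
by rewrite inE => /submxP[u ->] ->; rewrite -mulmxA submxMl.
Qed.

Lemma wt_ext n a b (v : 'rV['F_2]_n) :
  wt (ext a b v) = ((a != 0%R) + (b != 0%R) + wt v)%N.
Proof.
rewrite /wt -!sum1dep_card big_split_ord big_mkcond /= !big_ord_recl big_ord0 /ext.
rewrite !row_mxEl !mxE /= addn0; congr (_ + _ + _)%N; try by case: (_ != 0).
by apply: eq_bigl => i; rewrite row_mxEr.
Qed.

Lemma wt_ext_le n a b (v : 'rV['F_2]_n) : (wt (ext a b v) <= (wt v).+2)%N.
Proof.
by rewrite wt_ext -[(wt v).+2]add2n leq_add2r; case: (a != 0); case: (b != 0).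
Qed.

Lemma wt_ext_gt n a b (v : 'rV['F_2]_n) :
  (a != 0) || (b != 0) -> (wt v < wt (ext a b v))%N.
Proof. by rewrite wt_ext; case: (a != 0); case: (b != 0). Qed.

Lemma ext0 n : ext 0 0 (0 : 'rV['F_2]_n) = 0.
Proof.
by apply/rowP => j; rewrite /ext !mxE; case: split => i; rewrite !mxE ?if_same.
Qed.

Lemma ext_add n a b a' b' (v v' : 'rV['F_2]_n) :
  ext a b v + ext a' b' v' = ext (a + a') (b + b') (v + v').
Proof.
by rewrite /ext add_row_mx; congr row_mx; apply/rowP => j; rewrite !mxE; case: ifP.
Qed.

Lemma ext_scale n s a b (v : 'rV['F_2]_n) :
  s *: ext a b v = ext (s * a) (s * b) (s *: v).
Proof.
by rewrite /ext scale_row_mx; congr row_mx; apply/rowP => j; rewrite !mxE; case: ifP.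
Qed.

Definition ext_mx n (x : 'rV['F_2]_n) (p q : 'F_2) : 'M['F_2]_(n, 2 + n) :=
  row_mx (x^T *m \row_(j < 2) if j == 0%N :> nat then p else q) 1%:M.

Lemma mul_ext_mx n (x c : 'rV['F_2]_n) p q :
  c *m ext_mx x p q = ext (dot x c * p) (dot x c * q) c.
Proof.
rewrite /ext /ext_mx mul_mx_row mulmx1 mulmxA; congr row_mx; apply/rowP => j.
by rewrite !mxE big_ord1 -/(dot c x) dotC !mxE; case: ifP.
Qed.

Definition ext_code k n (G : 'M['F_2]_(k, n)) x (p0 q0 p q : 'F_2) :=
  code (col_mx (ext p0 q0 x) (G *m ext_mx x p q)).

Lemma code_G13 k n (G : 'M['F_2]_(k, n)) x : code (G13 G x) = ext_code G x 1 0 1 1.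
Proof.
rewrite /G13 /ext_code; congr (code (col_mx _ _)); apply/row_matrixP => i.
by rewrite rowK row_mul mul_ext_mx !mulr1.
Qed.

Lemma code_G2 k n (G : 'M['F_2]_(k, n)) x : code (G2 G x) = ext_code G x 1 1 1 0.
Proof.
rewrite /G2 /ext_code; congr (code (col_mx _ _)); apply/row_matrixP => i.
by rewrite rowK row_mul mul_ext_mx mulr1 mulr0.
Qed.

Lemma mem_ext_code k n (G : 'M['F_2]_(k, n)) x p0 q0 p q v :
  v \in ext_code G x p0 q0 p q <->
  exists a, exists2 c, c \in code G &
    v = ext (a * p0 + dot x c * p) (a * q0 + dot x c * q) (a *: x + c).
Proof.
split=> [/mem_code_row_col[a [_ /mem_code_mulmx[c Cc ->] ->]] | [a [c Cc ->]]].
  by exists a, c; rewrite // mul_ext_mx ext_scale ext_add.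
apply/mem_code_row_col; exists a, (c *m ext_mx x p q).
  by apply/mem_code_mulmx; exists c.
by rewrite mul_ext_mx ext_scale ext_add.
Qed.

Section ExtCodeBounds.

Variables (k n : nat) (G : 'M['F_2]_(k, n)) (x : 'rV['F_2]_n) (p0 q0 p q : 'F_2).
Hypothesis prefix_neq0 : forall y : 'F_2, (p0 + y * p != 0) || (q0 + y * q != 0).

Local Notation C := (code G).
Local Notation C' := (ext_code G x p0 q0 p q).

Lemma ext_code_mindist_ge :
  (minn (mindist C) (coset_wt x C).+1 <= mindist C')%N.
Proof.
apply: leq_mindist => [|v /mem_ext_code[a [c Cc ->]] v_nz].
  by rewrite geq_min orbC add2n ltnS leqW //; exact: (@bigmin_le_id _ nat).
case: (F2_eq01 a) v_nz => -> v_nz;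
  rewrite ?(mul0r, add0r, scale0r, mul1r, scale1r) in v_nz *.
- have c_nz : c != 0 by apply: contraNneq v_nz => ->; rewrite dotx0 !mul0r ext0.
  by rewrite geq_min (leq_trans (mindist_le Cc c_nz)) // wt_ext leq_addl.
- rewrite geq_min; apply/orP; right.
  exact: leq_ltn_trans (coset_wt_le x Cc) (wt_ext_gt _ (prefix_neq0 _)).
Qed.

Lemma ext_code_mindist_le : (mindist C' <= (covering_radius C).+2)%N.
Proof.
apply: (@leq_trans (coset_wt x C).+2); last first.
  by rewrite !ltnS coset_wt_le_covering_radius.
have [c Cc ->] := coset_wt_attained x (code0 G).
pose v := ext (p0 + dot x c * p) (q0 + dot x c * q) (x + c).
have C'v : v \in C'.
  by apply/mem_ext_code; exists 1, c; rewrite ?scale1r ?mul1r.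
have wt_v_gt : (wt (x + c) < wt v)%N := wt_ext_gt (x + c) (prefix_neq0 (dot x c)).
have v_nz : v != 0 by apply: contraTneq wt_v_gt => ->; rewrite wt0.
exact: leq_trans (mindist_le C'v v_nz) (wt_ext_le _ _ _).
Qed.

End ExtCodeBounds.

Theorem corollary1 (n k : nat) (G : 'M['F_2]_(k, n)) (x : 'rV['F_2]_n) :
  (0 < k)%N -> row_free G ->
  let C := code G in
  let lo := minn (mindist C) (coset_wt x C).+1 in
  let hi := (covering_radius C).+2 in
  (dot x x = 1 ->
     (lo <= mindist (code (G13 G x)) <= hi)%N) /\
  (dot x x = 0 ->
     (lo <= mindist (code (G2 G x)) <= hi)%N) /\
  (dot x x = 0 ->
     (lo <= mindist (code (G13 G x)) <= hi)%N).
Proof.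
move=> _ _ C lo hi.
have prefix13 (y : 'F_2) : (1 + y * 1 != 0) || (0 + y * 1 != 0).
  by case: (F2_eq01 y) => ->.
have prefix2 (y : 'F_2) : (1 + y * 1 != 0) || (1 + y * 0 != 0).
  by case: (F2_eq01 y) => ->.
have bounds13 : (lo <= mindist (code (G13 G x)) <= hi)%N.
  by rewrite code_G13 (ext_code_mindist_ge G x prefix13)
             (ext_code_mindist_le G x prefix13).
have bounds2 : (lo <= mindist (code (G2 G x)) <= hi)%N.
  by rewrite code_G2 (ext_code_mindist_ge G x prefix2)
             (ext_code_mindist_le G x prefix2).
by split; [|split] => _.
Qed.
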